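(* Let $d\ge2$, let $a:\mathbb{Z}^d\curvearrowright X$ be a free Borel action, let $S=\{\pm e_1,\dots,\pm e_d\}$ be the standard generating set of $\mathbb{Z}^d$, and let $U''$ be a single $\mathbb{Z}^d$-orbit. Let $U,V\subseteq U''$ be such that the $G(a,S)$-path distance between $U$ and $V$ is greater than $4d+1$, and let $c$ be an edge coloring of $G(a,S)\upharpoonright(U\cup V)$ with colors $\{1,\dots,2d\}$ which follows protocol $x_0$ on $U$ and protocol $x_1$ on $V$, for some $x_0,x_1\in U''$. Then $c$ can be extended to an edge coloring of $G(a,S)\upharpoonright U''$ with colors $\{1,\dots,2d\}$ which still follows protocol $x_0$ on $U$ and protocol $x_1$ on $V$.
   Context: $e_i\in\mathbb{Z}^d$ has $1$ in coordinate $i$ and $0$ elsewhere. $G(a,S)$ is the Schreier graph: $x,y$ adjacent iff $y=\gamma\cdot x$ for some $\gamma\in S$; each edge has the unique form $(x,e_i\cdot x)$. An edge coloring gives distinct colors to edges sharing a vertex. Protocol: for $U\subseteq U'\subseteq U''$, an edge coloring $c$ of $G(a,S)\upharpoonright U'$ and $x_0\in U''$, $c$ follows protocol $x_0$ on $U$ if every edge $(x,e_i\cdot x)$ of $G(a,S)\upharpoonright U'$ meeting $U$ receives color $2i-1$ if $a_i$ is even and color $2i$ if $a_i$ is odd, where $(a_1,\dots,a_d)\in\mathbb{Z}^d$ is the unique element with $(a_1,\dots,a_d)\cdot x_0=x$. *)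

From mathcomp Require Import all_boot all_order all_algebra.
Set Implicit Arguments. Unset Strict Implicit. Unset Printing Implicit Defensive.
Import Order.TTheory GRing.Theory Num.Theory.
Local Open Scope ring_scope.

(* Z^d is modelled as integer row vectors 'rV[int]_d; an action of Z^d on X
   is a map act : 'rV[int]_d -> X -> X (axioms are hypotheses of the theorem). *)

Definition ebas (d : nat) (i : 'I_d) : 'rV[int]_d := delta_mx 0 i.

Section Schreier.
Variables (d : nat) (X : Type) (act : 'rV[int]_d -> X -> X).

Definition sadj (x y : X) : Prop :=
  exists i : 'I_d, y = act (ebas i) x \/ y = act (- ebas i) x.

Fixpoint within (n : nat) (x y : X) : Prop :=
  match n with
  | O => x = y
  | S m => within m x y \/ exists w, within m x w /\ sadj w y
  end.

Definition dist_gt (U V : X -> Prop) (n : nat) : Prop :=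
  forall u v, U u -> V v -> ~ within n u v.

(* The edge (x, e_i . x) is represented by the pair (x, i).
   It is an edge of G(a,S) restricted to W iff both endpoints are in W. *)
Definition edge_in (W : X -> Prop) (x : X) (i : 'I_d) : Prop :=
  W x /\ W (act (ebas i) x).

Definition meets (U : X -> Prop) (x : X) (i : 'I_d) : Prop :=
  U x \/ U (act (ebas i) x).

(* c : X -> 'I_d -> nat assigns the colour c x i to the edge (x, e_i . x).
   Edge colouring of G(a,S)|W with colours {1,...,k}: edges sharing a vertex
   get distinct colours. *)
Definition edge_coloring (W : X -> Prop) (k : nat) (c : X -> 'I_d -> nat) : Prop :=
  (forall x i, edge_in W x i -> (1 <= c x i <= k)%N) /\
  (forall x i y j, edge_in W x i -> edge_in W y j -> (x, i) <> (y, j) ->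
     (x = y \/ x = act (ebas j) y \/ act (ebas i) x = y
      \/ act (ebas i) x = act (ebas j) y) ->
     c x i <> c y j).

(* protocol colour of edge (x, e_i . x) when x = a . x0: 2i-1 if a_i even,
   2i if a_i odd (paper's 1-based i; here i is 0-based, so 2i+1 / 2i+2). *)
Definition protocol_color (a : 'rV[int]_d) (i : 'I_d) : nat :=
  if (2%:Z %| a ord0 i)%Z then (2 * i).+1 else (2 * i).+2.

Definition follows_protocol (U U' : X -> Prop) (x0 : X) (c : X -> 'I_d -> nat) : Prop :=
  forall x i, edge_in U' x i -> meets U x i ->
    forall a : 'rV[int]_d, act a x0 = x -> c x i = protocol_color a i.

End Schreier.

From mathcomp Require Import all_boot all_order all_algebra fingroup perm.
From mathcomp Require Import zify ring.
From Stdlib Require Import ClassicalEpsilon.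
Import GRing.Theory.
Local Open Scope ring_scope.
Set Implicit Arguments. Unset Strict Implicit.

(* Measured from x0, the orbit is the grid Z^d, and following protocol x0
   (resp. x1 = b.x0) means carrying the parity colouring, which gives the edge
   (a, a + e_i) the class (i, a_i mod 2) (resp. the class (i, (a - b)_i mod 2));
   the two differ exactly by exchanging the classes (i, even) and (i, odd) for
   the directions i with b_i odd.  In a colouring obtained from the parity one
   by renaming classes, two colour classes of distinct directions meet exactly
   in unit squares, so exchanging them on any set of such squares keeps the
   colouring proper (a Kempe swap).  Exchanging (i, even) with (i, odd) takes
   three such transpositions through a class of another direction j.  The at
   most 3d swaps are performed on the squares meeting shrinking neighbourhoods
   of V (radii 3d, 3d - 1, ...), so that each one acts where the colouring is
   still a renaming of the parity colouring, while edges at distance more than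
   3d + 2 from V, in particular those meeting U, keep their protocol colour. *)

Section Walks.
Variables (d : nat) (X : Type) (act : 'rV[int]_d -> X -> X).

Lemma within_refl m x : within act m x x.
Proof. by elim: m => [|m IH] //=; left. Qed.

Lemma within_mono m n x y : (m <= n)%N -> within act m x y -> within act n x y.
Proof.
elim: n => [|n IH]; first by rewrite leqn0 => /eqP ->.
by rewrite leq_eqVlt => /orP [/eqP -> //|]; rewrite ltnS => hm H; left; apply: IH.
Qed.

Lemma within1 x y : x = y \/ sadj act x y -> within act 1 x y.
Proof. by case=> H; [left | right; exists x]. Qed.

Lemma within_trans m n x y z :
  within act m x y -> within act n y z -> within act (m + n) x z.
Proof.
move=> Hxy; elim: n z => [|n IH] z /=; first by move=> <-; rewrite addn0.
rewrite addnS => -[H|[w [H1 H2]]]; first by left; apply: IH.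
by right; exists w; split; first exact: IH.
Qed.

End Walks.

Section KempeSwap.
Variables (edge vertex : Type) (C : finType) (incident : edge -> vertex -> Prop).

Definition proper_coloring (col : edge -> C) : Prop :=
  forall f g w, f <> g -> incident f w -> incident g w -> col f <> col g.

Definition kempe_swap (A : edge -> Prop) (a b : C) (col : edge -> C) (f : edge) : C :=
  if excluded_middle_informative (A f) then tperm a b (col f) else col f.

Lemma kempe_swap_in A a b col f : A f -> kempe_swap A a b col f = tperm a b (col f).
Proof. by rewrite /kempe_swap; case: excluded_middle_informative. Qed.

Lemma kempe_swap_out A a b col f : ~ A f -> kempe_swap A a b col f = col f.
Proof. by rewrite /kempe_swap; case: excluded_middle_informative. Qed.

Lemma kempe_swap_proper (A : edge -> Prop) a b col :
  proper_coloring col ->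
  (forall f w, A f -> incident f w ->
     exists g, [/\ A g, incident g w & col g = tperm a b (col f)]) ->
  proper_coloring (kempe_swap A a b col).
Proof.
move=> Hcol Hpartner.
have one_side f g w : A f -> ~ A g -> incident f w -> incident g w ->
    tperm a b (col f) <> col g.
  move=> Af Ag fw gw; have [h [Ah hw <-]] := Hpartner f w Af fw.
  by apply: Hcol hw gw => hg; apply: Ag; rewrite -hg.
move=> f g w fg fw gw.
have [Af|Af] := excluded_middle_informative (A f);
  have [Ag|Ag] := excluded_middle_informative (A g).
- by rewrite !kempe_swap_in // => /perm_inj; apply: Hcol fw gw.
- by rewrite kempe_swap_in // kempe_swap_out //; apply: one_side Af Ag fw gw.
- by rewrite kempe_swap_out // kempe_swap_in //; apply: nesym; apply: one_side Ag Af gw fw.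
- by rewrite !kempe_swap_out //; apply: Hcol fw gw.
Qed.

End KempeSwap.

Section Lattice.
Variable d : nat.
Local Notation vec := 'rV[int]_d.
Local Notation edge := (vec * 'I_d)%type.
Local Notation eclass := ('I_d * bool)%type.

Definition incident (E : edge) (w : vec) : Prop := w = E.1 \/ w = E.1 + ebas E.2.

Local Notation proper := (proper_coloring incident).

Definition coord_even (a : vec) (k : 'I_d) : bool := (2%:Z %| a ord0 k)%Z.

Definition parity_class (E : edge) : eclass := (E.2, coord_even E.1 E.2).

Lemma coord_even_shift a l k : coord_even (a + ebas l) k = (k == l) (+) coord_even a k.
Proof. by rewrite /coord_even /ebas !mxE /=; case: (k == l) => /=; lia. Qed.

Lemma coord_even_shiftN a l k : coord_even (a - ebas l) k = (k == l) (+) coord_even a k.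
Proof. by rewrite /coord_even /ebas !mxE /=; case: (k == l) => /=; lia. Qed.

Lemma coord_even_sub a b k : coord_even (a - b) k = coord_even a k (+) ~~ coord_even b k.
Proof.
rewrite /coord_even !mxE.
by case: (2%:Z %| a ord0 k)%Z / idP; case: (2%:Z %| b ord0 k)%Z / idP => /=; lia.
Qed.

Definition class_color (c : eclass) : nat := if c.2 then (2 * c.1).+1 else (2 * c.1).+2.

Lemma class_color_inj : injective class_color.
Proof.
move=> [i p] [j q]; rewrite /class_color /= => H.
have ij : i = j :> nat by move: H; case: p; case: q => /=; lia.
by rewrite (ord_inj ij); move: H; case: p; case: q => //=; lia.
Qed.

Lemma class_color_range c : (1 <= class_color c <= 2 * d)%N.
Proof. by case: c => i p; rewrite /class_color /=; have := ltn_ord i; case: p; lia. Qed.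

(* [ebas] is abstracted first, since [mxE] would unfold it into [delta_mx]. *)
Ltac vec_ring :=
  repeat match goal with |- context [ebas ?i] => generalize (ebas i) => ? end;
  apply/rowP => ?; rewrite ?mxE; ring.

Definition square_edges (i j : 'I_d) (s : vec) : seq edge :=
  [:: (s, i); (s + ebas j, i); (s, j); (s + ebas i, j)].

Definition square_vertices (i j : 'I_d) (s : vec) : seq vec :=
  [:: s; s + ebas i; s + ebas j; s + ebas i + ebas j].

Lemma square_incident_vertex i j s E w :
  E \in square_edges i j s -> incident E w -> w \in square_vertices i j s.
Proof.
rewrite /square_edges /square_vertices !inE => /or4P[]/eqP-> [|] -> /=;
  by rewrite ?eqxx ?orbT // addrAC eqxx !orbT.
Qed.

Ltac incident_solve := rewrite /incident /=; first [left; vec_ring | right; vec_ring].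

Ltac within1_solve i j :=
  apply: within1;
  first [left; vec_ring | right; first [exists i; incident_solve | exists j; incident_solve]].

Lemma square_edge_near_vertex i j s E y :
  E \in square_edges i j s -> y \in square_vertices i j s ->
  exists2 w, incident E w & within +%R 1 w y.
Proof.
have endpoint a k y' : within +%R 1 a y' \/ within +%R 1 (a + ebas k) y' ->
    exists2 w, incident (a, k) w & within +%R 1 w y'.
  by case=> H; [exists a; first left | exists (a + ebas k); first right].
rewrite /square_edges /square_vertices !inE => /or4P[]/eqP-> /or4P[]/eqP->;
  apply: endpoint; first [left; within1_solve i j | right; within1_solve i j].
Qed.

Definition square_type := (eclass * eclass)%type.

Definition nondegenerate (st : square_type) : bool := st.1.1 != st.2.1.

Definition square_at (st : square_type) (s : vec) : Prop :=
  parity_class (s, st.1.1) = st.1 /\ parity_class (s, st.2.1) = st.2.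

Lemma square_edge_class st s E : nondegenerate st -> square_at st s ->
  E \in square_edges st.1.1 st.2.1 s ->
  parity_class E = if E.2 == st.1.1 then st.1 else st.2.
Proof.
case: st => [[i p] [j q]]; rewrite /nondegenerate /square_at /parity_class /=.
move=> hij [[<-] [<-]]; rewrite /square_edges !inE => /or4P[]/eqP-> /=;
  by rewrite ?coord_even_shift ?eqxx ?(eq_sym j i) ?(negbTE hij).
Qed.

Ltac partner_try E' hji :=
  exists E'; [ by rewrite !inE eqxx ?orbT
             | split; [incident_solve | by rewrite /= eqxx ?hji] ].

Lemma square_partner st s E w : nondegenerate st -> square_at st s ->
  E \in square_edges st.1.1 st.2.1 s -> incident E w ->
  exists E', [/\ E' \in square_edges st.1.1 st.2.1 s, incident E' w &
    parity_class E' = tperm st.1 st.2 (parity_class E)].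
Proof.
move=> hst sq HE Ew.
suff [E' HE' [E'w hdir]] : exists2 E', E' \in square_edges st.1.1 st.2.1 s &
    incident E' w /\ (E'.2 == st.1.1) = (E.2 != st.1.1).
  exists E'; split => //; rewrite !(square_edge_class hst sq) // hdir.
  by case: (E.2 == st.1.1); rewrite /= ?tpermL ?tpermR.
case: st hst {sq} HE Ew => [[i p] [j q]] /= hij.
have hji : (j == i) = false by rewrite eq_sym (negbTE hij).
rewrite /square_edges !inE => /or4P[]/eqP-> [] ->;
  first [ partner_try (s, i) hji | partner_try (s + ebas j, i) hji
        | partner_try (s, j) hji | partner_try (s + ebas i, j) hji ].
Qed.

Lemma square_through st E : nondegenerate st ->
  parity_class E = st.1 \/ parity_class E = st.2 ->
  exists2 s, square_at st s & E \in square_edges st.1.1 st.2.1 s.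
Proof.
case: st => [[i p] [j q]]; case: E => a k.
rewrite /nondegenerate /square_at /parity_class /= => hij.
have hji : (j == i) = false by rewrite eq_sym (negbTE hij).
case=> -[-> <-].
- have [aj|aj] := eqVneq (coord_even a j) q.
    by exists a; rewrite ?aj // !inE eqxx.
  exists (a - ebas j); last by rewrite !inE subrK eqxx ?orbT.
  by rewrite !coord_even_shiftN eqxx (negbTE hij); move: aj; case: q; case: coord_even.
- have [ai|ai] := eqVneq (coord_even a i) p.
    by exists a; rewrite ?ai // !inE eqxx ?orbT.
  exists (a - ebas i); last by rewrite !inE subrK eqxx ?orbT.
  by rewrite !coord_even_shiftN eqxx hji; move: ai; case: p; case: coord_even.
Qed.

Lemma incident_within1 E u w : incident E u -> incident E w -> within +%R 1 u w.
Proof.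
case: E => a l; rewrite /incident /= => -[] -> [] ->; apply: within1;
  first [left; vec_ring | right; exists l; first [left; vec_ring | right; vec_ring]].
Qed.

Lemma parity_class_proper : proper parity_class.
Proof.
move=> [a l] [b k] w Hne Ea Eb [El Hpar]; subst k.
move: Ea Eb Hpar; rewrite /incident /= => -[] -> [] H.
- by move=> _; apply: Hne; rewrite H.
- by rewrite H coord_even_shift eqxx /=; case: coord_even.
- by rewrite -H coord_even_shift eqxx /=; case: coord_even.
- by move=> _; apply: Hne; rewrite (addIr _ H).
Qed.

Section KempeChain.
Variables (V' : vec -> Prop) (N : nat).

Definition near (m : nat) (y : vec) : Prop := exists2 v, V' v & within +%R m y v.

Lemma near_mono m n y : (m <= n)%N -> near m y -> near n y.
Proof. by move=> mn [v Vv vy]; exists v => //; apply: within_mono vy. Qed.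

Lemma near_step m w y : within +%R 1 w y -> near m y -> near m.+1 w.
Proof. by move=> wy [v Vv yv]; exists v => //; exact: within_trans wy yv. Qed.

Definition swap_region (st : square_type) (T : nat) (E : edge) : Prop :=
  exists s, [/\ square_at st s, E \in square_edges st.1.1 st.2.1 s &
    exists2 y, y \in square_vertices st.1.1 st.2.1 s & near T y].

Fixpoint relabel (l : seq square_type) : {perm eclass} :=
  if l is st :: r then (tperm st.1 st.2 * relabel r)%g else 1%g.

(* The head swap, performed after the [k = size r] swaps of [r], acts on squares
   within distance [N - k] of [V']; on the region one step wider, [r] has only
   relabelled [parity_class], where two colour classes meet exactly in unit
   squares. *)
Fixpoint kempe_coloring (l : seq square_type) : edge -> eclass :=
  if l is st :: r then
    kempe_swap (swap_region st (N - size r)) (relabel r st.1) (relabel r st.2)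
      (kempe_coloring r)
  else parity_class.

Lemma relabel_tperm l x y z :
  relabel l (tperm x y z) = tperm (relabel l x) (relabel l y) (relabel l z).
Proof. by apply: inj_tperm; apply: perm_inj. Qed.

Lemma kempe_coloring_near l E w : all nondegenerate l -> (size l <= N)%N ->
  incident E w -> near (N.+1 - size l) w ->
  kempe_coloring l E = relabel l (parity_class E).
Proof.
elim: l => [|st r IH] /=; first by rewrite perm1.
move=> /andP[hst hr] hs Ew Hw.
have in_region : parity_class E = st.1 \/ parity_class E = st.2 ->
    swap_region st (N - size r) E.
  move=> /(square_through hst) [s sq HE]; exists s; split => //.
  by exists w; [exact: square_incident_vertex HE Ew | rewrite -subSS].
have IHE : kempe_coloring r E = relabel r (parity_class E).
  by apply: IH => //; [lia | apply: near_mono Hw; lia].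
rewrite permM; have [inside|out] := excluded_middle_informative (swap_region st (N - size r) E).
  by rewrite kempe_swap_in // IHE relabel_tperm.
rewrite kempe_swap_out // IHE tpermD //; apply/eqP => /esym hc; apply: out.
  by apply: in_region; left.
by apply: in_region; right.
Qed.

Lemma kempe_coloring_proper l : all nondegenerate l -> (size l <= N)%N ->
  proper (kempe_coloring l).
Proof.
elim: l => [|st r IH] /=; first by move=> _ _; exact: parity_class_proper.
move=> /andP[hst hr] hs; apply: kempe_swap_proper; first by apply: IH => //; lia.
move=> E w [s [sq HE [y Hy Ny]]] Ew.
have [E' [HE' E'w hcls]] := square_partner hst sq HE Ew.
exists E'; split => //; first by exists s; split => //; exists y.
have relabelled F : F \in square_edges st.1.1 st.2.1 s ->
    kempe_coloring r F = relabel r (parity_class F).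
  move=> HF; have [u Fu uy] := square_edge_near_vertex HF Hy.
  apply: kempe_coloring_near hr _ Fu _; first lia.
  by apply: near_mono (near_step uy Ny); lia.
by rewrite !relabelled // hcls relabel_tperm.
Qed.

Lemma kempe_coloring_far l E u : incident E u -> ~ near N.+2 u ->
  kempe_coloring l E = parity_class E.
Proof.
elim: l => [|st r IH] //= Eu far.
have [[s [sq HE [y Hy Ny]]]|out] := excluded_middle_informative (swap_region st (N - size r) E);
  last by rewrite kempe_swap_out // IH.
exfalso; apply: far.
have [w Ew wy] := square_edge_near_vertex HE Hy.
apply: near_mono (near_step (incident_within1 Eu Ew) (near_step wy Ny)); lia.
Qed.

End KempeChain.

Lemma relabel_cat l1 l2 : relabel (l1 ++ l2) = (relabel l1 * relabel l2)%g.
Proof. by elim: l1 => [|st l1 IH] /=; rewrite ?mul1g // IH mulgA. Qed.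

(* Squares span two directions, so the two parity classes of direction [i] never
   share a square; they are exchanged by a detour through the class [(j, true)]. *)
Definition parity_flip (i j : 'I_d) : seq square_type :=
  [:: ((i, true), (j, true)); ((i, false), (j, true)); ((i, true), (j, true))].

Lemma relabel_parity_flip i j : i != j ->
  relabel (parity_flip i j) = tperm (i, true) (i, false).
Proof.
move=> ij; rewrite /= mulg1 -[X in (X * _)%g]tpermV -conjgE tpermJ tpermR tpermC.
by rewrite tpermD // xpair_eqE negb_and ?eqxx ?orbT // eq_sym ij.
Qed.

Section ParityFlips.
Variable other : 'I_d -> 'I_d.
Hypothesis other_neq : forall i, i != other i.

Definition parity_flips (F : seq 'I_d) : seq square_type :=
  flatten [seq parity_flip i (other i) | i <- F].

Lemma parity_flips_nondegenerate F : all nondegenerate (parity_flips F).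
Proof. by elim: F => //= i F IH; rewrite /nondegenerate /= other_neq. Qed.

Lemma size_parity_flips F : size (parity_flips F) = (3 * size F)%N.
Proof. by elim: F => //= i F IH; rewrite IH mulnS. Qed.

Lemma relabel_parity_flips F c : uniq F ->
  relabel (parity_flips F) c = (c.1, c.2 (+) (c.1 \in F)).
Proof.
elim: F c => [|i F IH] [k p]; first by rewrite /= perm1 addbF.
rewrite cons_uniq => /andP[iF uF].
rewrite [parity_flips _]/= -/(parity_flips F) relabel_cat relabel_parity_flip // permM in_cons.
have [->|ki] := eqVneq k i.
  by case: p; rewrite ?tpermL ?tpermR IH //= (negbTE iF).
by rewrite tpermD ?IH // xpair_eqE negb_and eq_sym ki.
Qed.

End ParityFlips.

Theorem lattice_coloring (hd : (1 < d)%N) (U' V' : vec -> Prop) (b : vec) :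
  dist_gt +%R U' V' (3 * d).+2 ->
  exists col : edge -> eclass, [/\ proper col,
    forall E u, U' u -> incident E u -> col E = parity_class E &
    forall E v, V' v -> incident E v -> col E = parity_class (E.1 - b, E.2)].
Proof.
move=> far.
pose o0 : 'I_d := Ordinal (ltnW hd); pose o1 : 'I_d := Ordinal hd.
pose other i := if i == o0 then o1 else o0.
have other_neq i : i != other i by rewrite /other; have [->|] := eqVneq i o0.
pose F := [seq i <- enum 'I_d | ~~ coord_even b i].
pose l := parity_flips other F.
have uF : uniq F by rewrite filter_uniq ?enum_uniq.
have ndl : all nondegenerate l := parity_flips_nondegenerate other_neq F.
have szl : (size l <= 3 * d)%N.
  by rewrite size_parity_flips leq_mul2l size_filter (leq_trans (count_size _ _)) ?size_enum_ord.
exists (kempe_coloring V' (3 * d) l); split.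
- exact: kempe_coloring_proper.
- move=> E u Uu Eu; apply: kempe_coloring_far Eu _ => -[v Vv].
  exact: far.
- move=> E v Vv Ev; rewrite (kempe_coloring_near ndl szl Ev); last first.
    by exists v => //; exact: within_refl.
  by rewrite relabel_parity_flips // /parity_class /= mem_filter mem_enum andbT coord_even_sub.
Qed.

End Lattice.

Section Orbit.
Variables (d : nat) (X : Type) (act : 'rV[int]_d -> X -> X).
Hypothesis actD : forall g h x, act (g + h) x = act g (act h x).
Hypothesis free : forall g x, act g x = x -> g = 0.
Variable x0 : X.
Local Notation edge := ('rV[int]_d * 'I_d)%type.

Lemma act_inj : injective (act^~ x0).
Proof.
move=> a a' H; apply/eqP; rewrite -subr_eq0; apply/eqP/(free (x := act a' x0)).
by rewrite -actD subrK.
Qed.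

Definition orbit_coord (x : X) : 'rV[int]_d := epsilon (inhabits 0) (fun a => act a x0 = x).

Lemma orbit_coordK x : (exists a, act a x0 = x) -> act (orbit_coord x) x0 = x.
Proof. exact: epsilon_spec. Qed.

Lemma orbit_coord_act a : orbit_coord (act a x0) = a.
Proof. by apply: act_inj; apply: orbit_coordK; exists a. Qed.

Lemma within_act m a b : within +%R m a b -> within act m (act a x0) (act b x0).
Proof.
elim: m b => [|m IH] b /=; first by move=> ->.
case=> [H|[w [H1 [i H2]]]]; first by left; apply: IH.
right; exists (act w x0); split; first exact: IH.
by exists i; case: H2 => ->; rewrite actD; [left | right].
Qed.

Lemma act_shared_vertex a i a' j :
  act a x0 = act a' x0 \/ act a x0 = act (ebas j) (act a' x0) \/
  act (ebas i) (act a x0) = act a' x0 \/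
  act (ebas i) (act a x0) = act (ebas j) (act a' x0) ->
  exists w, incident (a, i) w /\ incident (a', j) w.
Proof.
rewrite -!actD => -[|[|[|]]] /act_inj E.
- by exists a; split; left.
- by exists a; split; [left | right; rewrite E addrC].
- by exists a'; split; [right; rewrite -E addrC | left].
- by exists (a + ebas i); split; right => //; rewrite addrC E addrC.
Qed.

Variable col : edge -> 'I_d * bool.

Definition pullback (x : X) (i : 'I_d) : nat := class_color (col (orbit_coord x, i)).

Lemma pullback_edge_coloring (W : X -> Prop) :
  (forall x, W x -> exists a, act a x0 = x) -> proper_coloring (@incident d) col ->
  edge_coloring act W (2 * d) pullback.
Proof.
move=> W_orbit Hcol; split=> [x i _|]; first exact: class_color_range.
move=> x i y j [/W_orbit[a <-] _] [/W_orbit[a' <-] _] ne shared.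
rewrite /pullback !orbit_coord_act => /class_color_inj.
have [w [aw a'w]] := act_shared_vertex shared.
by apply: Hcol aw a'w => -[aa' ij]; apply: ne; rewrite aa' ij.
Qed.

Lemma pullback_follows_protocol (A W : X -> Prop) b :
  (forall E v, A (act v x0) -> incident E v -> col E = parity_class (E.1 - b, E.2)) ->
  follows_protocol act A W (act b x0) pullback.
Proof.
move=> Hcol x i _ Ax a xE; subst x.
rewrite /meets /pullback -!actD orbit_coord_act in Ax *.
have [v Av Ev] : exists2 v, A (act v x0) & incident (a + b, i) v.
  case: Ax => Av; [exists (a + b) | exists (ebas i + (a + b))] => //.
    by left.
  by right; rewrite addrC.
by rewrite (Hcol _ _ Av Ev) /= addrK.
Qed.

End Orbit.

Theorem lemma7 (d : nat) (hd : (2 <= d)%N) (X : Type)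
  (act : 'rV[int]_d -> X -> X)
  (act0 : forall x, act 0 x = x)
  (actD : forall g h x, act (g + h) x = act g (act h x))
  (free : forall g x, act g x = x -> g = 0)
  (U'' U V : X -> Prop)
  (orbit : exists z, forall y, U'' y <-> exists g, y = act g z)
  (UU : forall x, U x -> U'' x) (VU : forall x, V x -> U'' x)
  (hdist : dist_gt act U V (4 * d + 1))
  (c : X -> 'I_d -> nat) (x0 x1 : X) (hx0 : U'' x0) (hx1 : U'' x1)
  (hc : edge_coloring act (fun x => U x \/ V x) (2 * d) c)
  (hcU : follows_protocol act U (fun x => U x \/ V x) x0 c)
  (hcV : follows_protocol act V (fun x => U x \/ V x) x1 c) :
  exists c' : X -> 'I_d -> nat,
    edge_coloring act U'' (2 * d) c' /\
    (forall x i, edge_in act (fun x => U x \/ V x) x i -> c' x i = c x i) /\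
    follows_protocol act U U'' x0 c' /\
    follows_protocol act V U'' x1 c'.
Proof.
have orbit_of x y : U'' x -> U'' y -> exists a, act a x = y.
  by case: orbit => z Hz /Hz[g ->] /Hz[h ->]; exists (h - g); rewrite -actD subrK.
have [b bx1] := orbit_of _ _ hx0 hx1.
have far : dist_gt +%R (fun a => U (act a x0)) (fun a => V (act a x0)) (3 * d).+2.
  move=> u v Uu Vv /(within_act actD x0) uv; apply: hdist Uu Vv _.
  by apply: within_mono uv; lia.
have [col [col_proper colU colV]] := lattice_coloring hd b far.
pose c' := pullback act x0 col.
have c'U : follows_protocol act U U'' x0 c'.
  rewrite -[x0 in follows_protocol _ _ _ x0]act0.
  by apply: (pullback_follows_protocol actD free) => E v Uv Ev; rewrite subr0; exact: colU Uv Ev.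
have c'V : follows_protocol act V U'' x1 c'.
  by rewrite -bx1; apply: (pullback_follows_protocol actD free) => E v Vv Ev; exact: colV Vv Ev.
exists c'; split; [|split; [|by split]].
  by apply: (pullback_edge_coloring actD free) => // x; apply: orbit_of.
move=> x i Hx; have Hx'' : edge_in act U'' x i by case: Hx => -[/UU|/VU] ? [/UU|/VU].
case: (Hx.1) => Ax.
- have [a Ha] := orbit_of _ _ hx0 (UU _ Ax).
  by rewrite (c'U _ _ Hx'' (or_introl Ax) _ Ha) (hcU _ _ Hx (or_introl Ax) _ Ha).
- have [a Ha] := orbit_of _ _ hx1 (VU _ Ax).
  by rewrite (c'V _ _ Hx'' (or_introl Ax) _ Ha) (hcV _ _ Hx (or_introl Ax) _ Ha).
Qed.
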